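(* Let $\Omega$ be a finite set, $(H_i\mid i\in\Omega)$ finite abelian groups, $\mathbf{H}=\prod_{i\in\Omega}H_i$, and let $\mathbf{P}=(\Omega,\preccurlyeq_{\mathbf{P}})$ be a hierarchical poset. Then the dual partition $\Lambda$ of $\mathcal{Q}(\mathbf{H},\mathbf{P})$ is finer than $\mathcal{Q}(\hat{\mathbf{H}},\overline{\mathbf{P}})$.
   Context: $\hat{\mathbf{H}}$ is the character group of $\mathbf{H}$, identified with $\prod_i\hat{H_i}$ via $\alpha(\beta)=\prod_i\alpha_{(i)}(\beta_{(i)})$; $\mathrm{supp}$ of a codeword is the set of coordinates where it is not the identity. $\overline{\mathbf{P}}$ is the dual poset. For a poset $\mathbf{Q}$ on $\Omega$, $\langle B\rangle_{\mathbf{Q}}$ is the down-closure of $B$ in $\mathbf{Q}$ and $\mathrm{wt}_{\mathbf{Q}}(\beta)=|\langle\mathrm{supp}(\beta)\rangle_{\mathbf{Q}}|$. $\mathcal{Q}(\mathbf{H},\mathbf{P})$ (resp. $\mathcal{Q}(\hat{\mathbf{H}},\overline{\mathbf{P}})$) is the partition of $\mathbf{H}$ (resp. $\hat{\mathbf{H}}$) into classes of equal $\mathbf{P}$-weight (resp. $\overline{\mathbf{P}}$-weight). $\Lambda$ is the partition of $\hat{\mathbf{H}}$ with $\chi\sim\psi$ iff $\sum_{b\in B}\chi(b)=\sum_{b\in B}\psi(b)$ for every block $B$ of $\mathcal{Q}(\mathbf{H},\mathbf{P})$. A partition is finer than another if each of its blocks lies in a block of the other. $\mathrm{len}(y)$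 is the largest cardinality of a chain in $\mathbf{P}$ with greatest element $y$; $\mathbf{P}$ is hierarchical if $\mathrm{len}(u)+1\leqslant\mathrm{len}(v)$ implies $u\preccurlyeq_{\mathbf{P}}v$. *)

From mathcomp Require Import all_boot all_order all_algebra all_field.

Set Implicit Arguments.
Unset Strict Implicit.
Unset Printing Implicit Defensive.

Import GRing.Theory.
Local Open Scope ring_scope.

(* Coordinates Omega are a finType I; a poset on I is a relation le : rel I,
   le x y meaning x <=_P y. *)

Section Posets.
Variable I : finType.

Definition is_poset (le : rel I) : Prop :=
  reflexive le /\ antisymmetric le /\ transitive le.

Definition dual_rel (le : rel I) : rel I := fun x y => le y x.

Definition downset (le : rel I) (B : {set I}) : {set I} :=
  [set j | [exists i in B, le j i]].

Definition is_chain (le : rel I) (C : {set I}) : bool :=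
  [forall x in C, forall y in C, le x y || le y x].

Definition plen (le : rel I) (y : I) : nat :=
  \max_(C : {set I} | [&& is_chain le C, y \in C & [forall c in C, le c y]]) #|C|.

Definition hierarchical (le : rel I) : Prop :=
  forall u v, (plen le u + 1 <= plen le v)%N -> le u v.
End Posets.

Section Codes.
Variable I : finType.
Variable H : I -> finZmodType.

Definition Hprod := {dffun forall i, H i}.

Definition supp (a : Hprod) : {set I} := [set i | a i != 0].

Definition wt (le : rel I) (a : Hprod) : nat := #|downset le (supp a)|.

Definition is_character (G : finZmodType) (f : G -> algC) : Prop :=
  f 0 = 1 /\ forall x y, f (x + y) = f x * f y.

(* an element of \hat H, identified with a family (chi_i) of characters
   chi_i of H_i; it acts by chi(b) = prod_i chi_i(b_i) *)
Definition char_eval (chi : forall i, H i -> algC) (b : Hprod) : algC :=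
  \prod_i chi i (b i).

Definition char_supp (chi : forall i, H i -> algC) : {set I} :=
  [set i | [exists x : H i, chi i x != 1]].

Definition char_wt (le : rel I) (chi : forall i, H i -> algC) : nat :=
  #|downset le (char_supp chi)|.

(* chi ~_Lambda psi : equal sums over every block of Q(H,P); the blocks are
   the classes {b | wt b = wt b0} *)
Definition Lambda_rel (le : rel I) (chi psi : forall i, H i -> algC) : Prop :=
  forall b0 : Hprod,
    \sum_(b : Hprod | wt le b == wt le b0) char_eval chi b =
    \sum_(b : Hprod | wt le b == wt le b0) char_eval psi b.
End Codes.

From mathcomp Require Import all_boot all_order all_algebra all_field.

Set Implicit Arguments.
Unset Strict Implicit.
Unset Printing Implicit Defensive.

Import GRing.Theory Num.Theory.
Local Open Scope ring_scope.

(* Fix a level k of P.  Since P is hierarchical, a word b supported in the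
   levels <= k has weight #|below k| + #|supp b :&: level k| if its support meets
   level k and weight <= #|below k| otherwise, while every other word is heavier
   than #|below k| + #|level k|.  So the polynomial sum_b chi(b) X^(wt b - #|below k|)
   over the words of weight <= #|below k| + #|level k| depends only on the
   Lambda-class of chi.  When chi is trivial below level k it factors over the
   coordinates as a nonzero constant times prod_(i in level k)
   (1 + (sum_x chi_i x - 1) X), whose factor is 1 - X if chi_i is nontrivial and
   does not vanish at 1 otherwise; so the multiplicity of the root 1 is
   #|supp chi :&: level k|.  For k the lowest level met by supp chi or supp psi,
   the dual weight of either character is this number plus #|above k|. *)

Lemma cardsU_disjoint (T : finType) (A B : {set T}) :
  [disjoint A & B] -> #|A :|: B| = (#|A| + #|B|)%N.
Proof. by move=> dAB; rewrite cardsU (disjoint_setI0 dAB) cards0 subn0. Qed.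

Section PosetLevels.
Variables (I : finType) (le : rel I).
Hypothesis le_poset : is_poset le.

Let le_refl : reflexive le. Proof. by case: le_poset. Qed.
Let le_anti : antisymmetric le. Proof. by case: le_poset => _ []. Qed.
Let le_trans : transitive le. Proof. by case: le_poset => _ []. Qed.

Lemma plen_gt0 w : (0 < plen le w)%N.
Proof.
apply: (@leq_trans #|[set w]|); first by rewrite cards1.
apply: leq_bigmax_cond; apply/and3P; split.
- by apply/forall_inP => x /set1P ->; apply/forall_inP => y /set1P ->; rewrite le_refl.
- exact: set11.
- by apply/forall_inP => c /set1P ->.
Qed.

Lemma plen_lt u v : le u v -> u != v -> (plen le u < plen le v)%N.
Proof.
move=> luv nuv; rewrite -(prednK (plen_gt0 v)) ltnS.
apply/bigmax_leqP => C /and3P [chC uC /forall_inP leCu].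
have vC : v \notin C.
  by apply: contra nuv => vC; apply/eqP/le_anti; rewrite luv leCu.
have leCv c : c \in C -> le c v by move=> cC; exact: le_trans (leCu c cC) luv.
rewrite -ltnS prednK ?plen_gt0 //.
have -> : #|C|.+1 = #|v |: C| by rewrite cardsU1 vC.
apply: leq_bigmax_cond; apply/and3P; split.
- apply/forall_inP => x /setU1P [->|xC]; apply/forall_inP => y /setU1P [->|yC].
  + by rewrite le_refl.
  + by rewrite leCv ?orbT.
  + by rewrite leCv.
  + by move/forall_inP: chC => /(_ x xC) /forall_inP /(_ y yC).
- exact: setU11.
- by apply/forall_inP => c /setU1P [->|/leCv].
Qed.

Lemma le_plen u v : le u v -> (plen le u <= plen le v)%N.
Proof. by move=> luv; case: (eqVneq u v) => [->//|nuv]; exact/ltnW/plen_lt. Qed.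

Lemma le_plen_inj u v : le u v -> plen le u = plen le v -> u = v.
Proof.
move=> luv e; apply/eqP; apply: contraT => nuv.
by have := plen_lt luv nuv; rewrite e ltnn.
Qed.

Definition plen_below k := [set i | (plen le i < k)%N].
Definition plen_level k := [set i | plen le i == k].
Definition plen_above k := [set i | (k < plen le i)%N].

Lemma disjoint_below_level k : [disjoint plen_below k & plen_level k].
Proof. by apply/pred0P => i /=; rewrite !inE; case: ltngtP. Qed.

Lemma disjoint_level_above k : [disjoint plen_level k & plen_above k].
Proof. by apply/pred0P => i /=; rewrite !inE; case: ltngtP. Qed.

Hypothesis le_hier : hierarchical le.

Let le_below_level i j k : i \in plen_below k :|: plen_level k ->
  (k < plen le j)%N -> le i j.
Proof.
move=> ik kj; apply: le_hier; rewrite addn1; apply: leq_trans kj; rewrite ltnS.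
by move: ik; rewrite !inE => /orP [/ltnW|/eqP ->].
Qed.

Lemma downset_sub_below k (S : {set I}) :
  S \subset plen_below k -> downset le S \subset plen_below k.
Proof.
move=> /subsetP sS; apply/subsetP => j; rewrite inE => /exists_inP [i iS lji].
by have := sS i iS; rewrite !inE; apply: leq_ltn_trans (le_plen lji).
Qed.

Lemma downset_level k (S : {set I}) :
  S \subset plen_below k :|: plen_level k -> S :&: plen_level k != set0 ->
  downset le S = plen_below k :|: (S :&: plen_level k).
Proof.
move=> /subsetP sS /set0Pn [i0]; rewrite !inE => /andP [i0S /eqP i0k].
apply/setP => j; rewrite !inE; apply/idP/idP.
- case/exists_inP => i iS lji; have lj := le_plen lji.
  have := sS i iS; rewrite !inE => /orP [ik|/eqP ik].
    by rewrite (leq_ltn_trans lj ik).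
  have [//|kj|jk] := ltngtP (plen le j) k; first by rewrite -ik ltnNge lj in kj.
  by rewrite (le_plen_inj lji (etrans jk (esym ik))) iS.
- case/orP => [jk|/andP [jS _]]; apply/exists_inP.
    by exists i0 => //; apply: le_hier; rewrite addn1 i0k.
  by exists j.
Qed.

Lemma card_downset_gt k (S : {set I}) :
  ~~ (S \subset plen_below k :|: plen_level k) ->
  (#|plen_below k| + #|plen_level k| < #|downset le S|)%N.
Proof.
case/subsetPn => i iS ik; rewrite -cardsU_disjoint ?disjoint_below_level //.
apply: proper_card; apply/properP; split.
  apply/subsetP => j jk; rewrite inE; apply/exists_inP; exists i => //.
  by apply: le_below_level jk _; move: ik; rewrite !inE negb_or -leqNgt; case: ltngtP.
by exists i => //; rewrite inE; apply/exists_inP; exists i.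
Qed.

Lemma dual_downset_level k (S : {set I}) :
  [disjoint S & plen_below k] -> S :&: plen_level k != set0 ->
  downset (dual_rel le) S = (S :&: plen_level k) :|: plen_above k.
Proof.
move=> dS /set0Pn [i0]; rewrite !inE => /andP [i0S /eqP i0k].
have kS i : i \in S -> (k <= plen le i)%N.
  by move=> iS; rewrite leqNgt; apply: contraL iS => ik; rewrite (disjointFl dS) // inE.
apply/setP => j; rewrite !inE; apply/idP/idP.
- case/exists_inP => i iS lij; have ij := le_plen lij.
  have ki := kS i iS.
  have [jk|kj|jk] := ltngtP (plen le j) k.
  - by have := leq_trans ki ij; rewrite leqNgt jk.
  - by rewrite orbT.
  have ik : plen le i = k by apply/eqP; rewrite eqn_leq ki -jk ij.
  by rewrite -(le_plen_inj lij (etrans ik (esym jk))) iS.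
- case/orP => [/andP [jS _]|kj]; apply/exists_inP; first by exists j => //; exact: le_refl.
  by exists i0 => //; apply: le_hier; rewrite addn1 i0k.
Qed.

End PosetLevels.

Section WeightPolynomial.
Variables (I : finType) (H : I -> finZmodType) (le : rel I) (k : nat).
Hypotheses (le_poset : is_poset le) (le_hier : hierarchical le).

Definition level_coef i : {poly algC} :=
  if i \in plen_below le k then 1 else if i \in plen_level le k then 'X else 0.

Definition coord_poly i (x : H i) : {poly algC} :=
  if x == 0 then 1 else level_coef i.

Definition wt_poly (w : nat) : {poly algC} :=
  if (w <= #|plen_below le k| + #|plen_level le k|)%N
  then 'X^(w - #|plen_below le k|) else 0.

Lemma wt_poly_prod (b : Hprod H) : wt_poly (wt le b) = \prod_i coord_poly (b i).
Proof.
rewrite /wt_poly /wt; set S := supp b.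
have [sS|nsS] := boolP (S \subset plen_below le k :|: plen_level le k); last first.
  rewrite leqNgt card_downset_gt //; case/subsetPn: nsS => i iS ik.
  rewrite (bigD1 i) //= /coord_poly /level_coef; move: iS ik; rewrite !inE.
  by move=> /negbTE -> /norP [/negbTE -> /negbTE ->]; rewrite mul0r.
have -> : \prod_i coord_poly (b i) = 'X^#|S :&: plen_level le k|.
  rewrite -prodr_const [RHS]big_mkcond; apply: eq_bigr => i _.
  rewrite /coord_poly /level_coef !inE; have := subsetP sS i.
  case: eqP => [//|/eqP bi]; rewrite !inE bi => /(_ isT) /orP [ik|/eqP ->].
    by rewrite ik (ltn_eqF ik).
  by rewrite ltnn eqxx.
have [SL0|SL] := eqVneq (S :&: plen_level le k) set0.
  have sSB : S \subset plen_below le k.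
    apply/subsetP => i iS; have /setUP [//|iL] := subsetP sS i iS.
    by move/setP: SL0 => /(_ i); rewrite in_setI in_set0 iS iL.
  have := subset_leq_card (downset_sub_below le_poset sSB).
  rewrite SL0 cards0 => sdB; rewrite (leq_trans sdB (leq_addr _ _)).
  by move: sdB; rewrite -subn_eq0 => /eqP ->.
have dBL := disjointWr (subsetIr S _) (disjoint_below_level le k).
rewrite (downset_level le_poset le_hier sS SL) cardsU_disjoint // addKn leq_add2l.
by rewrite subset_leq_card ?subsetIr.
Qed.

End WeightPolynomial.

Lemma mup_prod (F : fieldType) (x : F) (J : Type) (r : seq J) (P : pred J)
    (f : J -> {poly F}) :
  (forall j, P j -> f j != 0) ->
  mup x (\prod_(j <- r | P j) f j) = (\sum_(j <- r | P j) mup x (f j))%N.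
Proof.
move=> f_neq0.
pose K (p : {poly F}) (n : nat) := p != 0 /\ mup x p = n.
suff [] : K (\prod_(j <- r | P j) f j) (\sum_(j <- r | P j) mup x (f j))%N by [].
apply: (big_rec2 K); first by split; rewrite ?oner_neq0 ?mupNroot ?root1.
move=> j p n Pj [p_neq0 <-]; split; first by rewrite mulf_neq0 ?f_neq0.
by rewrite mupM ?f_neq0.
Qed.

Lemma one_subX_neq0 (F : fieldType) : (1 - 'X : {poly F}) != 0.
Proof.
have : ~~ root (1 - 'X : {poly F}) 0.
  by rewrite rootE hornerD hornerN hornerX -polyC1 hornerC subr0 oner_eq0.
by apply: contraNneq => ->; rewrite root0.
Qed.

Lemma mup_one_subX (F : fieldType) : mup 1 (1 - 'X : {poly F}) = 1%N.
Proof.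
rewrite -opprB -polyC1 -mulN1r mupMr; last by rewrite rootN root1.
by rewrite -[_ - _]expr1 mup_XsubCX eqxx.
Qed.

Lemma prodr_sum_dffun (R : comNzRingType) (I : finType) (T_ : I -> finType)
    (F : forall i, T_ i -> R) :
  \prod_i \sum_(x : T_ i) F i x =
  \sum_(b : {dffun forall i, T_ i}) \prod_i F i (b i).
Proof.
rewrite [RHS](reindex (@dffun_of_fprod I T_)); last exact/onW_bij/dffun_of_fprod_bij.
pose P_ i := [ffun x => F i x].
transitivity (\sum_(t : fprod T_) \prod_(i in I) P_ i (t i)); last first.
  by apply: eq_bigr => b _; apply: eq_bigr => i _; rewrite !ffunE.
rewrite big_fprod.
under eq_bigr => i _ do rewrite (big_tag (T_ := T_)).
rewrite bigA_distr_big_dep; apply: eq_bigr => g _; apply: eq_bigr => i _.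
by rewrite /untag; case: eqP => // e; rewrite ffunE.
Qed.

Lemma natr_card_neq0 (G : finZmodType) : (#|G|%:R : algC) != 0.
Proof. by rewrite pnatr_eq0 -lt0n; apply/card_gt0P; exists 0. Qed.

Lemma sum_character (G : finZmodType) (f : G -> algC) : is_character f ->
  \sum_x f x = if [exists x, f x != 1] then 0 else #|G|%:R.
Proof.
move=> [_ fM]; case: ifPn => [/existsP [y /negPf fy1]|]; last first.
  rewrite negb_exists => /forallP f1.
  by under eq_bigr => x _ do rewrite (eqP (negbNE (f1 x))); rewrite sumr_const.
have fyS : \sum_x f x = f y * \sum_x f x.
  rewrite mulr_sumr (reindex_inj (addIr y)) /=.
  by apply: eq_bigr => x _; rewrite fM mulrC.
apply/eqP; move/eqP: fyS; rewrite -subr_eq0 -{1}[\sum_x f x]mul1r -mulrBl.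
by rewrite mulf_eq0 subr_eq0 eq_sym fy1.
Qed.

Lemma Lambda_rel_sum_wt (I : finType) (H : I -> finZmodType) (le : rel I)
    (chi psi : forall i, H i -> algC) (V : lmodType algC) (g : nat -> V) :
  Lambda_rel le chi psi ->
  \sum_(b : Hprod H) char_eval chi b *: g (wt le b) =
  \sum_(b : Hprod H) char_eval psi b *: g (wt le b).
Proof.
move=> chi_psi.
have wt_lt b : (wt le b < #|I|.+1)%N by rewrite ltnS max_card.
have sum_by_wt (phi : forall i, H i -> algC) :
    \sum_(b : Hprod H) char_eval phi b *: g (wt le b) =
    \sum_(w < #|I|.+1) (\sum_(b : Hprod H | wt le b == w) char_eval phi b) *: g w.
  rewrite (partition_big (fun b => inord (wt le b) : 'I_#|I|.+1) xpredT) //.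
  apply: eq_bigr => w _; rewrite scaler_suml; apply: eq_big => b.
    by rewrite -val_eqE /= inordK.
  by rewrite -val_eqE /= inordK // => /eqP ->.
rewrite !sum_by_wt; apply: eq_bigr => w _; congr (_ *: _).
have [b0 /eqP <-|no_wt] := pickP (fun b : Hprod H => wt le b == w).
  exact: chi_psi.
by rewrite !big_pred0.
Qed.

Section CharacterFactors.
Variables (I : finType) (H : I -> finZmodType) (le : rel I) (k : nat).
Variable phi : forall i, H i -> algC.
Arguments phi : clear implicits.
Hypothesis phi_char : forall i, is_character (phi i).
Hypotheses (le_poset : is_poset le) (le_hier : hierarchical le).

Lemma sum_char_coord i :
  \sum_x phi i x = if i \in char_supp phi then 0 else #|H i|%:R.
Proof. by rewrite sum_character // inE. Qed.

Definition level_factor i : {poly algC} :=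
  1 + (\sum_x phi i x - 1) *: level_coef le k i.

Lemma sum_char_wt_poly :
  \sum_(b : Hprod H) char_eval phi b *: wt_poly le k (wt le b) =
  \prod_i level_factor i.
Proof.
pose F i (x : H i) := phi i x *: coord_poly le k x.
rewrite (eq_bigr (fun b : Hprod H => \prod_i F i (b i))); last first.
  by move=> b _; rewrite wt_poly_prod // /char_eval -scaler_prod.
rewrite -prodr_sum_dffun; apply: eq_bigr => i _; have [phi0 _] := phi_char i.
rewrite (bigD1 0) //= /F /coord_poly eqxx phi0 scale1r /level_factor.
rewrite [\sum_x phi i x](bigD1 0) //= phi0 [1 + _ - 1]addrC addKr scaler_suml.
by congr (1 + _); apply: eq_bigr => x /negPf ->.
Qed.

Lemma level_factor_supp i :
  i \in char_supp phi :&: plen_level le k -> level_factor i = 1 - 'X.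
Proof.
rewrite in_setI => /andP [iS iL].
rewrite /level_factor /level_coef iL (disjointFl (disjoint_below_level le k)) //.
by rewrite sum_char_coord iS sub0r scaleN1r.
Qed.

Lemma level_factor_nroot i :
  (i \in plen_below le k -> i \notin char_supp phi) ->
  i \notin char_supp phi :&: plen_level le k -> ~~ root (level_factor i) 1.
Proof.
move=> triv_below; rewrite in_setI negb_and.
rewrite /level_factor /level_coef sum_char_coord.
have [iB|nB] := boolP (i \in plen_below le k).
  rewrite (negPf (triv_below iB)) /= => _.
  by rewrite alg_polyC -polyC1 -polyCD rootC addrC subrK natr_card_neq0.
have [iL|nL] := boolP (i \in plen_level le k); last by rewrite scaler0 addr0 root1.
rewrite orbF => /negPf ->.
rewrite rootE hornerD hornerZ hornerX -polyC1 hornerC mulr1 addrC subrK.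
exact: natr_card_neq0.
Qed.

Lemma mup_level_factors :
  [disjoint char_supp phi & plen_below le k] ->
  mup 1 (\prod_i level_factor i) = #|char_supp phi :&: plen_level le k|.
Proof.
move=> triv_below; have triv_i i : i \in plen_below le k -> i \notin char_supp phi.
  by move=> iB; rewrite (disjointFl triv_below).
rewrite mup_prod => [|i _]; last first.
  have [/level_factor_supp ->|nSL] := boolP (i \in char_supp phi :&: plen_level le k).
    exact: one_subX_neq0.
  by apply: contraNneq (level_factor_nroot (@triv_i i) nSL) => ->; rewrite root0.
rewrite -sum1_card [RHS]big_mkcond; apply: eq_bigr => i _ /=.
have [/level_factor_supp ->|nSL] := boolP (i \in char_supp phi :&: plen_level le k).
  exact: mup_one_subX.
exact: mupNroot (level_factor_nroot (@triv_i i) nSL).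
Qed.

End CharacterFactors.

Section LambdaClasses.
Variables (I : finType) (H : I -> finZmodType) (le : rel I).
Hypotheses (le_poset : is_poset le) (le_hier : hierarchical le).

Lemma Lambda_rel_card_supp_level k (chi psi : forall i, H i -> algC) :
  (forall i, is_character (chi i)) -> (forall i, is_character (psi i)) ->
  [disjoint char_supp chi & plen_below le k] ->
  [disjoint char_supp psi & plen_below le k] ->
  Lambda_rel le chi psi ->
  #|char_supp chi :&: plen_level le k| = #|char_supp psi :&: plen_level le k|.
Proof.
move=> chi_char psi_char chi_below psi_below chi_psi.
rewrite -mup_level_factors // -mup_level_factors //.
by rewrite -!sum_char_wt_poly // (Lambda_rel_sum_wt (wt_poly le k) chi_psi).
Qed.

Lemma char_wt_dual_level k (phi : forall i, H i -> algC) :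
  [disjoint char_supp phi & plen_below le k] ->
  char_supp phi :&: plen_level le k != set0 ->
  char_wt (dual_rel le) phi =
    (#|char_supp phi :&: plen_level le k| + #|plen_above le k|)%N.
Proof.
move=> phi_below phi_level.
rewrite /char_wt (dual_downset_level le_poset le_hier phi_below phi_level).
by rewrite cardsU_disjoint // (disjointWl (subsetIr _ _) (disjoint_level_above le k)).
Qed.

Lemma char_wt_dual_eq_level k (chi psi : forall i, H i -> algC) :
  [disjoint char_supp chi & plen_below le k] ->
  [disjoint char_supp psi & plen_below le k] ->
  #|char_supp chi :&: plen_level le k| = #|char_supp psi :&: plen_level le k| ->
  (char_supp chi :|: char_supp psi) :&: plen_level le k != set0 ->
  char_wt (dual_rel le) chi = char_wt (dual_rel le) psi.
Proof.
move=> chi_below psi_below card_eq.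
rewrite setIUl setU_eq0 negb_and -!card_gt0 -card_eq orbb card_gt0 => chi_level.
have psi_level : char_supp psi :&: plen_level le k != set0.
  by rewrite -card_gt0 -card_eq card_gt0.
rewrite (char_wt_dual_level chi_below chi_level).
by rewrite (char_wt_dual_level psi_below psi_level) card_eq.
Qed.

End LambdaClasses.

Theorem corollary2p2 (I : finType) (H : I -> finZmodType) (le : rel I) :
  is_poset le -> hierarchical le ->
  forall chi psi : forall i, H i -> algC,
    (forall i, is_character (chi i)) ->
    (forall i, is_character (psi i)) ->
    Lambda_rel le chi psi ->
    char_wt (dual_rel le) chi = char_wt (dual_rel le) psi.
Proof.
move=> le_poset le_hier chi psi chi_char psi_char chi_psi.
set N := char_supp chi :|: char_supp psi.
have [N0|[i0 i0N]] := set_0Vmem N.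
  move/eqP: N0; rewrite setU_eq0 => /andP [/eqP chi0 /eqP psi0].
  by rewrite /char_wt chi0 psi0.
have [i iN i_min] := arg_minnP (plen le) i0N; set k := plen le i.
have N_below : [disjoint N & plen_below le k].
  by rewrite disjoints_subset; apply/subsetP => j jN; rewrite !inE -leqNgt i_min.
have chi_below := disjointWl (subsetUl _ _) N_below.
have psi_below := disjointWl (subsetUr _ _) N_below.
apply: (char_wt_dual_eq_level le_poset le_hier chi_below psi_below).
  exact: Lambda_rel_card_supp_level.
apply/set0Pn; exists i; rewrite in_setI [_ \in plen_level _ _]inE eqxx andbT.
exact: iN.
Qed.
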